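(* Let $A_m(x)=R_{2m}(x)$ and $B_m(x)=R_{2m+1}(x)$ for $m\ge0$. Then, as formal power series in $z$, \[ \sum_{m\ge0}A_m(x)z^m=\frac{1-xz^2}{1-(1+x+x^2)z+x^2z^2},\qquad \sum_{m\ge0}B_m(x)z^m=\frac{1+x^3z}{1-(1+x+x^2)z+x^2z^2}+x . \]
   Context: For $n\ge1$ let $\Xi_n$ be the poset on $\{x_1,\dots,x_n\}$ whose cover relations are exactly: $x_2\prec x_1$, $x_3\prec x_2$, and for $3\le i\le n-1$, $x_i\prec x_{i+1}$ if $i$ is odd and $x_{i+1}\prec x_i$ if $i$ is even (so $x_1>x_2>x_3<x_4>x_5<\cdots$). A filter of a poset is an up-closed subset. $\Omega_n$ is the lattice of filters of $\Xi_n$ under reverse inclusion; $\Omega_0$ is the one-element lattice. $R_n(x)=\sum_{F\in\Omega_n}x^{\,n-|F|}$ is the rank generating function of $\Omega_n$, with $R_0(x)=1$. *)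

From mathcomp Require Import all_boot all_order all_algebra.
Set Implicit Arguments. Unset Strict Implicit. Unset Printing Implicit Defensive.
Import GRing.Theory.
Local Open Scope ring_scope.

(* The poset Xi_n on {x_1,...,x_n}; element x_i is represented by the
   ordinal (i-1 : 'I_n).  xi_cover n a b  <=>  x_a is covered by x_b
   (x_a < x_b is a cover relation), with 1-based indices i = a+1, j = b+1:
     x_2 < x_1, x_3 < x_2,
     for 3 <= i <= n-1: x_i < x_{i+1} if i odd, x_{i+1} < x_i if i even. *)
Definition xi_cover (n : nat) : rel 'I_n := fun a b =>
  let i := (a.+1)%N in let j := (b.+1)%N in
  [|| (i == 2) && (j == 1),
      (i == 3) && (j == 2),
      [&& (3 <= i)%N, odd i & j == i.+1]
    | [&& (3 <= j)%N, ~~ odd j & i == j.+1] ].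

Definition xi_le (n : nat) (a b : 'I_n) : bool := connect (@xi_cover n) a b.

Definition is_filter (n : nat) (F : {set 'I_n}) : bool :=
  [forall a : 'I_n, forall b : 'I_n, (a \in F) && xi_le a b ==> (b \in F)].

Definition R (n : nat) : {poly int} :=
  \sum_(F : {set 'I_n} | is_filter F) 'X^(n - #|F|).

Definition fps := nat -> {poly int}.
Definition fps_mul (f g : fps) : fps :=
  fun k => \sum_(i < k.+1) f i * g (k - i)%N.
Definition fps_sub (f g : fps) : fps := fun k => f k - g k.
Definition fps_const (c : {poly int}) : fps := fun k => if k == 0%N then c else 0.
Definition fps_of_poly (p : {poly {poly int}}) : fps := fun k => p`_k.

Definition xx : {poly int} := 'X.
Definition zz : {poly {poly int}} := 'X.

Definition Den : {poly {poly int}} :=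
  1 - (1 + xx + xx ^+ 2)%:P * zz + (xx ^+ 2)%:P * zz ^+ 2.
Definition NumA : {poly {poly int}} := 1 - xx%:P * zz ^+ 2.
Definition NumB : {poly {poly int}} := 1 + (xx ^+ 3)%:P * zz.

Definition A_ser : fps := fun m => R (2 * m).
Definition B_ser : fps := fun m => R (2 * m).+1.

From mathcomp Require Import all_boot all_order all_algebra.
From mathcomp Require Import zify ring.
From Stdlib Require Import FunctionalExtensionality.
Set Implicit Arguments. Unset Strict Implicit. Unset Printing Implicit Defensive.
Import GRing.Theory.
Local Open Scope ring_scope.

(* A filter of the fence Xi_(n+1) is a filter of Xi_n plus a decision on x_(n+1),
   constrained only by the cover between x_n and x_(n+1).  Splitting the rank
   generating function according to membership of the last element thus gives a
   2x2 transfer-matrix recursion whose matrix depends only on the direction of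
   that cover.  Two consecutive steps (a rise, then a fall) compose to the matrix
   [[1, 1], [x, x + x^2]] of trace 1 + x + x^2 and determinant x^2, so by
   Cayley-Hamilton A_m and B_m satisfy the recurrence with characteristic
   polynomial t^2 - (1 + x + x^2) t + x^2; the numerators are read off the first
   terms. *)

Definition cover_closed (T : finType) (r : rel T) (F : {set T}) : bool :=
  [forall a, forall b, r a b ==> (a \in F) ==> (b \in F)].

Lemma cover_closedP (T : finType) (r : rel T) (F : {set T}) :
  reflect (forall a b, r a b -> a \in F -> b \in F) (cover_closed r F).
Proof.
apply: (iffP forallP) => [H a b rab | H a].
  by move/forallP/(_ b)/implyP/(_ rab)/implyP: (H a).
by apply/forallP => b; apply/implyP => /H ?; apply/implyP.
Qed.

Lemma connect_closedE (T : finType) (r : rel T) (F : {set T}) :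
  [forall a, forall b, (a \in F) && connect r a b ==> (b \in F)] = cover_closed r F.
Proof.
apply/forallP/cover_closedP => [H a b rab aF | H a].
  by move/forallP/(_ b): (H a); rewrite aF connect1.
apply/forallP => b; apply/implyP => /andP[aF /connectP[p r_p ->]].
by elim: p a aF r_p => //= c p IHp a aF /andP[/H/(_ aF) cF /IHp]; apply.
Qed.

Section LastElement.

Variable n : nat.

Definition drop_last (G : {set 'I_n.+1}) : {set 'I_n} := [set j | lift ord_max j \in G].

Definition extend_last (F : {set 'I_n}) (b : bool) : {set 'I_n.+1} :=
  [set i | if unlift ord_max i is Some j then j \in F else b].

Lemma mem_extend_last (F : {set 'I_n}) b (i : 'I_n.+1) :
  (i \in extend_last F b) = if unlift ord_max i is Some j then j \in F else b.
Proof. by rewrite inE. Qed.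

Lemma extend_lastK b : cancel (extend_last ^~ b) drop_last.
Proof. by move=> F; apply/setP => j; rewrite !inE liftK. Qed.

Lemma drop_lastK (G : {set 'I_n.+1}) : extend_last (drop_last G) (ord_max \in G) = G.
Proof. by apply/setP => i; rewrite inE; case: unliftP => [j|] ->; rewrite ?inE. Qed.

Lemma card_drop_last (G : {set 'I_n.+1}) : #|G| = (#|drop_last G| + (ord_max \in G))%N.
Proof.
rewrite -!sum1_card big_mkcond big_ord_recr [in RHS]big_mkcond /=.
congr (_ + _)%N; apply: eq_bigr => j _; rewrite inE.
by congr (if _ \in G then _ else _); apply: val_inj; exact: esym (lift_max j).
Qed.

Lemma card_extend_last (F : {set 'I_n}) b : #|extend_last F b| = (#|F| + b)%N.
Proof. by rewrite card_drop_last extend_lastK mem_extend_last unlift_none. Qed.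

End LastElement.

Section Fence.

Variable e : rel nat.
Hypothesis e_local : forall a b, e a b -> (b == a.+1) || (a == b.+1).

Definition fence n : rel 'I_n := fun a b => e a b.
Arguments fence : clear implicits.

Definition rank_sum n (P : pred {set 'I_n}) : {poly int} :=
  \sum_(F | cover_closed (fence n) F && P F) 'X^(n - #|F|)%N.

Definition last_sum n (b : bool) : {poly int} :=
  rank_sum (fun G : {set 'I_n.+1} => (ord_max \in G) == b).

Definition last_link n (F : {set 'I_n}) (b : bool) : bool :=
  [forall a : 'I_n, (e a n ==> (a \in F) ==> b) && (e n a ==> b ==> (a \in F))].

Lemma cover_closed_extend_last n (F : {set 'I_n}) b :
  cover_closed (fence n.+1) (extend_last F b) = cover_closed (fence n) F && last_link F b.
Proof.
apply/cover_closedP/andP => [H | [/cover_closedP HF /forallP Hl] a c].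
  split.
    apply/cover_closedP => a c.
    have := H (lift ord_max a) (lift ord_max c).
    by rewrite /fence !mem_extend_last !liftK !lift_max.
  apply/forallP => a; apply/andP; split; apply/implyP => ea; apply/implyP.
    have := H (lift ord_max a) ord_max.
    by rewrite /fence !mem_extend_last liftK unlift_none lift_max; apply.
  have := H ord_max (lift ord_max a).
  by rewrite /fence !mem_extend_last liftK unlift_none lift_max; apply.
rewrite /fence !mem_extend_last.
case: (unliftP ord_max a) => [a'|] ->; case: (unliftP ord_max c) => [c'|] ->;
  rewrite ?lift_max.
- exact: HF.
- by move=> ea; have /andP[/implyP/(_ ea)/implyP] := Hl a'.
- by move=> ec; have /andP[_ /implyP/(_ ec)/implyP] := Hl c'.
- by [].
Qed.

Lemma last_sum_link n b :
  last_sum n b = 'X^(~~ b) * rank_sum (fun F : {set 'I_n} => last_link F b).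
Proof.
rewrite /last_sum /rank_sum big_distrr /=.
rewrite (reindex_onto (fun F : {set 'I_n} => extend_last F b) (@drop_last n)); last first.
  by move=> G /andP[_ /eqP <-]; apply: drop_lastK.
apply: eq_big => F.
  by rewrite cover_closed_extend_last extend_lastK mem_extend_last unlift_none !eqxx !andbT.
move=> _; rewrite card_extend_last -exprD; congr ('X^_).
case: b; rewrite /= ?addn0 ?addn1 ?subSS ?add1n ?subSn //.
by rewrite -[n in (_ <= n)%N]card_ord max_card.
Qed.

Lemma rank_sum_ord0 (P : pred {set 'I_0}) : P set0 -> rank_sum P = 1.
Proof.
have set0_ord0 (F : {set 'I_0}) : F = set0 by apply/setP => -[].
move=> P0; rewrite /rank_sum (big_pred1 set0) ?cards0 // => F.
by rewrite (set0_ord0 F) P0 andbT /= eqxx; apply/cover_closedP => -[].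
Qed.

Lemma last_sum0 b : last_sum 0 b = 'X^(~~ b).
Proof. by rewrite last_sum_link rank_sum_ord0 ?mulr1 //; apply/forallP => -[]. Qed.

(* [c] and [b] tell whether the old last element [n] and the new one [n.+1]
   belong to the filter. *)
Definition last_compat n (c b : bool) : bool :=
  (e n n.+1 ==> c ==> b) && (e n.+1 n ==> b ==> c).

Lemma last_linkS n (F : {set 'I_n.+1}) b : last_link F b = last_compat n (ord_max \in F) b.
Proof.
apply/forallP/idP => [/(_ ord_max) // | compat a].
case: (unliftP ord_max a) => [a'|] -> //.
have a'_lt : (lift ord_max a' < n)%N by rewrite lift_max ltn_ord.
have no_edge (c : nat) : (c < n)%N -> e c n.+1 = false /\ e n.+1 c = false.
  by move=> c_lt; split; apply/negP => /e_local; lia.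
by have [-> ->] := no_edge _ a'_lt.
Qed.

Lemma last_sumS n b :
  last_sum n.+1 b = 'X^(~~ b) * \sum_(c | last_compat n c b) last_sum n c.
Proof.
rewrite last_sum_link; congr (_ * _).
rewrite /rank_sum (partition_big (fun F : {set 'I_n.+1} => ord_max \in F) (last_compat n ^~ b)).
  apply: eq_bigr => c cb; apply: eq_bigl => F; rewrite last_linkS.
  by case: eqP => [->|_]; rewrite ?cb ?andbF ?andbT.
by move=> F /andP[_]; rewrite last_linkS.
Qed.

Lemma rank_sum_last n : rank_sum (n := n.+1) xpredT = last_sum n true + last_sum n false.
Proof.
rewrite /rank_sum (bigID (fun G : {set 'I_n.+1} => ord_max \in G)) /=.
by congr (_ + _); apply: eq_bigl => G; rewrite andbT ?eqb_id ?eqbF_neg.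
Qed.

End Fence.

(* [xi_cover n] is the restriction of this relation to ['I_n]. *)
Definition xi_cover_nat : rel nat := fun a b =>
  let i := a.+1 in let j := b.+1 in
  [|| (i == 2) && (j == 1),
      (i == 3) && (j == 2),
      [&& (3 <= i)%N, odd i & j == i.+1]
    | [&& (3 <= j)%N, ~~ odd j & i == j.+1] ].

Definition xi_rises (m : nat) : bool := (2 <= m)%N && ~~ odd m.

Lemma xi_cover_nat_local a b : xi_cover_nat a b -> (b == a.+1) || (a == b.+1).
Proof. rewrite /xi_cover_nat; case: (odd _); case: (odd _); lia. Qed.

Lemma xi_cover_natS m : xi_cover_nat m m.+1 = xi_rises m.
Proof. rewrite /xi_cover_nat /xi_rises /=; case: (odd m) => /=; lia. Qed.

Lemma xi_cover_natSn m : xi_cover_nat m.+1 m = ~~ xi_rises m.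
Proof. rewrite /xi_cover_nat /xi_rises /=; case: (odd m) => /=; lia. Qed.

Lemma R_rank_sum n : R n = rank_sum xi_cover_nat (n := n) xpredT.
Proof. by apply: eq_bigl => F; rewrite andbT -connect_closedE. Qed.

Definition xi_pair k := (last_sum xi_cover_nat k true, last_sum xi_cover_nat k false).

Definition xi_step (rises : bool) (v : {poly int} * {poly int}) :=
  if rises then (v.1 + v.2, v.2 * 'X) else (v.1, (v.1 + v.2) * 'X).

Lemma xi_pair0 : xi_pair 0 = (1, 'X).
Proof. by rewrite /xi_pair !last_sum0 expr0 expr1. Qed.

Lemma xi_pairS k : xi_pair k.+1 = xi_step (xi_rises k) (xi_pair k).
Proof.
rewrite /xi_pair !(last_sumS xi_cover_nat_local) expr0 expr1 /last_compat.
rewrite xi_cover_natS xi_cover_natSn.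
by case: (xi_rises k); congr pair; rewrite big_mkcond big_bool /=; ring.
Qed.

Lemma R_xi_pair k : R k.+1 = (xi_pair k).1 + (xi_pair k).2.
Proof. by rewrite R_rank_sum rank_sum_last. Qed.

Lemma R0 : R 0 = 1.
Proof. by rewrite R_rank_sum rank_sum_ord0. Qed.

Definition xi_step2 (v : {poly int} * {poly int}) := xi_step false (xi_step true v).

(* [(- 'X, 1 + 'X)] is a virtual predecessor of [xi_pair 2] under [xi_step2]: it
   lets the recurrence start at index 0, at the price of the extra [x] in the
   B series. *)
Definition xi_even_pair (j : nat) := iter j xi_step2 (- 'X, 1 + 'X).

Lemma xi_rises_even j : xi_rises j.*2.+2.
Proof. by rewrite /xi_rises /= odd_double. Qed.

Lemma xi_rises_odd j : xi_rises j.*2.+3 = false.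
Proof. by rewrite /xi_rises /= odd_double. Qed.

Lemma xi_even_pairE j : xi_even_pair j.+1 = xi_pair j.*2.+2.
Proof.
elim: j => [|j IHj].
  by rewrite !xi_pairS xi_pair0 /= /xi_step2 /xi_step /=; congr pair; ring.
by rewrite [LHS]iterS -/(xi_even_pair j.+1) IHj doubleS !xi_pairS xi_rises_even xi_rises_odd.
Qed.

Lemma xi_even_pairSS j :
  xi_even_pair j.+2 =
  ((1 + 'X + 'X^2) * (xi_even_pair j.+1).1 - 'X^2 * (xi_even_pair j).1,
   (1 + 'X + 'X^2) * (xi_even_pair j.+1).2 - 'X^2 * (xi_even_pair j).2).
Proof.
rewrite /xi_even_pair !iterS; case: (iter j xi_step2 _) => p q.
by rewrite /xi_step2 /xi_step /=; congr pair; ring.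
Qed.

Lemma A_ser_even_pair j :
  A_ser j.+1 = (xi_even_pair j).1 + (xi_even_pair j).2 * (1 + 'X).
Proof.
rewrite /A_ser mul2n; case: j => [|j].
  by rewrite R_xi_pair xi_pairS xi_pair0 /=; ring.
by rewrite !doubleS R_xi_pair xi_even_pairE xi_pairS xi_rises_even /=; ring.
Qed.

Lemma B_ser_even_pair j :
  fps_sub B_ser (fps_const xx) j = (xi_even_pair j).1 + (xi_even_pair j).2.
Proof.
rewrite /fps_sub /fps_const /B_ser mul2n; case: j => [|j].
  by rewrite R_xi_pair xi_pair0 /xx /=; ring.
by rewrite doubleS R_xi_pair xi_even_pairE /= subr0.
Qed.

Lemma coef_Den i :
  Den`_i = (i == 0)%:R - (1 + xx + xx ^+ 2) * (i == 1)%:R + xx ^+ 2 * (i == 2)%:R.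
Proof. by rewrite /Den /zz coefD coefB coef1 !coefCM coefX coefXn. Qed.

Lemma Den_mul0 f : fps_mul (fps_of_poly Den) f 0%N = f 0%N.
Proof. by rewrite /fps_mul big_ord1 /fps_of_poly coef_Den /=; ring. Qed.

Lemma Den_mul1 f :
  fps_mul (fps_of_poly Den) f 1%N = f 1%N - (1 + xx + xx ^+ 2) * f 0%N.
Proof. by rewrite /fps_mul !big_ord_recl big_ord0 /fps_of_poly !coef_Den /=; ring. Qed.

Lemma Den_mulSS f k :
  fps_mul (fps_of_poly Den) f k.+2 = f k.+2 - (1 + xx + xx ^+ 2) * f k.+1 + xx ^+ 2 * f k.
Proof.
rewrite /fps_mul !big_ord_recl big1 => [|i _]; rewrite /fps_of_poly !coef_Den /=.
  by rewrite !subSS !subn0; ring.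
by ring.
Qed.

Lemma coef_NumA i : NumA`_i = (i == 0)%:R - xx * (i == 2)%:R.
Proof. by rewrite /NumA /zz coefB coef1 coefCM coefXn. Qed.

Lemma coef_NumB i : NumB`_i = (i == 0)%:R + xx ^+ 3 * (i == 1)%:R.
Proof. by rewrite /NumB /zz coefD coef1 coefCM coefX. Qed.

Theorem mainTheorem4 :
  fps_mul (fps_of_poly Den) A_ser = fps_of_poly NumA /\
  fps_mul (fps_of_poly Den) (fps_sub B_ser (fps_const xx)) = fps_of_poly NumB.
Proof.
have A_ser0 : A_ser 0 = 1 by exact: R0.
split; apply: functional_extensionality => -[|[|[|k]]];
  rewrite ?Den_mul0 ?Den_mul1 ?Den_mulSS /fps_of_poly ?coef_NumA ?coef_NumB /xx /=.
- by rewrite A_ser0; ring.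
- by rewrite A_ser0 A_ser_even_pair /=; ring.
- by rewrite A_ser0 !A_ser_even_pair /=; ring.
- by rewrite !A_ser_even_pair xi_even_pairSS /=; ring.
- by rewrite B_ser_even_pair /=; ring.
- by rewrite !B_ser_even_pair /=; ring.
- by rewrite !B_ser_even_pair xi_even_pairSS /=; ring.
- by rewrite !B_ser_even_pair xi_even_pairSS /=; ring.
Qed.
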